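(* Let $S\subseteq\mathbb Z$ be such that every translate $S+m$ ($m\in\mathbb Z$) is a set of recurrence. If $A\subseteq\mathbb Z$ has $d^*(A)>0$ and $n\in\mathbb Z$, then $S\cap(n+A-A)$ is infinite.
   Context: $S\subseteq\mathbb Z$ is a set of recurrence if for every measure preserving system $(X,\mu,T)$ (probability space, invertible measure preserving $T$) and every measurable $D$ with $\mu(D)>0$ there exists $k\in S$ with $\mu(D\cap T^kD)>0$. $A-A=\{a-b:a,b\in A\}$ and $d^*(A)=\lim_{N\to\infty}\sup_{M\in\mathbb Z}\frac{|A\cap[M,M+N-1]|}{N}$ is the upper Banach density. *)

From HB Require Import structures.
From mathcomp Require Import all_boot all_order all_algebra.
From mathcomp Require Import all_classical all_reals all_analysis.
From mathcomp Require Import Rstruct Rstruct_topology.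
Set Implicit Arguments. Unset Strict Implicit. Unset Printing Implicit Defensive.
Import Order.TTheory GRing.Theory Num.Theory.
Local Open Scope classical_set_scope.
Local Open Scope ring_scope.

Definition iter_int {X : Type} (T Tinv : X -> X) (k : int) : X -> X :=
  match k with
  | Posz n => iter n T
  | Negz n => iter n.+1 Tinv
  end.

Definition mps {d : measure_display} {X : measurableType d}
  (P : probability X Rdefinitions.R) (T Tinv : X -> X) : Prop :=
  [/\ measurable_fun setT T, measurable_fun setT Tinv,
      cancel T Tinv, cancel Tinv T &
      forall A, measurable A -> P (T @^-1` A) = P A].

Definition set_of_recurrence (S : set int) : Prop :=
  forall (d : measure_display) (X : measurableType d)
    (P : probability X Rdefinitions.R) (T Tinv : X -> X),
    mps P T Tinv ->
    forall D : set X, measurable D -> (0 < P D)%E ->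
      exists2 k, S k & (0 < P (D `&` (iter_int T Tinv k @` D)))%E.

Definition banach_window (A : set int) (N : nat) : Rdefinitions.R :=
  sup [set (\sum_(i < N) (\1_A (M + (i : nat)%:Z) : Rdefinitions.R)) / N%:R
       | M in [set: int]].

Definition upper_banach_density (A : set int) : Rdefinitions.R :=
  lim (banach_window A @ \oo).

Definition translate (S : set int) (m : int) : set int := [set s + m | s in S].

Definition shifted_diff (n : int) (A : set int) : set int :=
  [set n + (a - b) | a in A & b in A].

From HB Require Import structures.
From mathcomp Require Import all_boot all_order all_algebra.
From mathcomp Require Import all_classical all_reals all_analysis.
From mathcomp Require Import Rstruct Rstruct_topology.
From mathcomp Require Import ring lra zify.
Import Order.TTheory GRing.Theory Num.Theory.
Local Open Scope classical_set_scope.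
Local Open Scope ring_scope.
Set Implicit Arguments.
Unset Strict Implicit.
Unset Printing Implicit Defensive.

(* Averages of A over windows realising d*(A), passed to an ultrafilter limit,
   give a finitely additive, translation invariant density [dens] with
   [dens A > 0].  Through the shift on {0,1}^Z with the measure of a cylinder
   set defined by [dens], this yields Furstenberg's correspondence principle:
   a set of recurrence R contains some k with D and D + k meeting, whenever
   [dens D > 0].
   Given a bound B, pick t with |t| > B + |n| and A ∩ (A + t) of positive
   density, then a residue class mod q := B + |n| + |t| + 1 cutting out a part
   D of positive density.  Recurrence of S - n - t gives s in S with
   k := s - n - t, and j, j - k in D.  Then s = n + (j - (j - k - t)) lies in
   n + A - A, and q divides k: either k = 0 and |s| >= |t| - |n| > B, or
   |k| >= q and |s| >= q - |n| - |t| > B.  So S ∩ (n + A - A) is unbounded. *)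

Local Notation RR := Rdefinitions.R.

Definition Uoo_spec :=
  cid (ultraFilterLemma (eventually_filter : ProperFilter (\oo : set_system nat))).
Definition Uoo : set_system nat := proj1_sig Uoo_spec.

Lemma Uoo_ultra : UltraFilter Uoo.
Proof. exact: (proj1 (proj2_sig Uoo_spec)). Qed.

Lemma Uoo_oo : (\oo : set_system nat) `<=` Uoo.
Proof. exact: (proj2 (proj2_sig Uoo_spec)). Qed.

Instance Uoo_proper : ProperFilter Uoo.
Proof. by case: Uoo_ultra. Qed.

Definition ulim (f : nat -> RR) : RR := lim (f @ Uoo).

Lemma ulimE (f : nat -> RR) l : f @ Uoo --> l -> ulim f = l.
Proof. exact: (@cvg_lim _ (@Rhausdorff RR)). Qed.

Definition unit_valued (f : nat -> RR) := forall n, 0 <= f n <= 1.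

(* An ultrafilter pushed into the compact interval [0, 1] converges. *)
Lemma cvg_ulim f : unit_valued f -> f @ Uoo --> ulim f.
Proof.
move=> f01; have f01' : (f @ Uoo) (`[0, 1]%classic : set RR).
  by apply: nearW => n /=; rewrite in_itv /=; exact: f01.
have [p [_ clp]] := @segment_compact _ 0 1 _ (fmap_proper_filter f Uoo_proper) f01'.
suff fp : f @ Uoo --> p by exact: cvgP fp.
move=> V /= pV; case: (in_ultra_setVsetC (f @^-1` V) Uoo_ultra) => // nV.
by have [x []] := clp (~` V) V nV pV.
Qed.

Lemma ulim_ge f c : unit_valued f -> (\forall n \near Uoo, c <= f n) -> c <= ulim f.
Proof. by move=> f01 cf; apply: (closed_cvg (fun x => c <= x)) (cvg_ulim f01). Qed.

Lemma ulim_le f c : unit_valued f -> (\forall n \near Uoo, f n <= c) -> ulim f <= c.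
Proof. by move=> f01 fc; apply: (closed_cvg (fun x => x <= c)) (cvg_ulim f01). Qed.

Lemma ulimD f g : unit_valued f -> unit_valued g -> ulim (f \+ g) = ulim f + ulim g.
Proof.
move=> f01 g01; apply: ulimE.
exact: (@cvgD _ RR^o _ _ _ f g _ _ (cvg_ulim f01) (cvg_ulim g01)).
Qed.

Lemma eq_ulim f g : unit_valued f -> unit_valued g ->
  (f \- g) @ \oo --> (0 : RR) -> ulim f = ulim g.
Proof.
move=> f01 g01 fg0; apply/eqP; rewrite -subr_eq0; apply/eqP.
apply: (@cvg_unique _ (@Rhausdorff RR) _ (fmap_proper_filter (f \- g) Uoo_proper)).
- exact: (@cvgB _ RR^o _ _ _ f g _ _ (cvg_ulim f01) (cvg_ulim g01)).
- exact: cvg_trans (fun A oA => Uoo_oo oA) fg0.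
Qed.

Lemma indic_unit (B : set int) x : 0 <= (\1_B x : RR) <= 1.
Proof. by rewrite indicE; case: (x \in B); rewrite ?lexx ?ler01. Qed.

Lemma window_sum_bound (B : set int) (M : int) N :
  0 <= \sum_(i < N) (\1_B (M + (i : nat)%:Z) : RR) <= N%:R.
Proof.
apply/andP; split; first by apply: sumr_ge0 => i _; case/andP: (indic_unit B (M + i)).
rewrite -[N in N%:R]card_ord -sumr_const.
by apply: ler_sum => i _; case/andP: (indic_unit B (M + i)).
Qed.

Lemma window_frac_unit (B : set int) (M : int) N :
  0 <= (\sum_(i < N) (\1_B (M + (i : nat)%:Z) : RR)) / N%:R <= 1.
Proof.
case: N => [|N]; first by rewrite big_ord0 mul0r lexx ler01.
have /andP [s0 sN] := window_sum_bound B M N.+1.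
by rewrite divr_ge0 //= ler_pdivrMr ?ltr0Sn // mul1r.
Qed.

Section WindowDensity.
Variable M : nat -> int.

Definition window_avg (B : set int) (N : nat) : RR :=
  (\sum_(i < N) (\1_B (M N + (i : nat)%:Z) : RR)) / N%:R.

Definition dens (B : set int) : RR := ulim (window_avg B).

Lemma window_avg_unit B : unit_valued (window_avg B).
Proof. by move=> N; exact: window_frac_unit. Qed.

Lemma dens_ge0 B : 0 <= dens B.
Proof.
apply: ulim_ge; first exact: window_avg_unit.
by apply: nearW => N; case/andP: (window_avg_unit B N).
Qed.

Lemma dens_le1 B : dens B <= 1.
Proof.
apply: ulim_le; first exact: window_avg_unit.
by apply: nearW => N; case/andP: (window_avg_unit B N).
Qed.

Lemma densU B B' : B `&` B' = set0 -> dens (B `|` B') = dens B + dens B'.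
Proof.
move=> BB'0; rewrite /dens -ulimD; try exact: window_avg_unit.
congr ulim; apply: funext => N; rewrite /window_avg /= -mulrDl -big_split /=.
congr (_ * _); apply: eq_bigr => i _; rewrite !indicE in_setU.
have [Bx|_] := boolP (_ \in B); have [B'x|_] := boolP (_ \in B');
  rewrite /= ?addr0 ?add0r //.
by move: Bx B'x; rewrite !inE => Bx B'x; have : (B `&` B') (M N + i) by []; rewrite BB'0.
Qed.

Lemma densT : dens setT = 1.
Proof.
apply/eqP; rewrite eq_le dens_le1 /=; apply: ulim_ge; first exact: window_avg_unit.
apply: Uoo_oo; exists 1%N => // N /= N0.
rewrite /window_avg (eq_bigr (fun=> 1)); last by move=> i _; rewrite indicE in_setT.
by rewrite sumr_const card_ord divff // pnatr_eq0 -lt0n.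
Qed.

Lemma dens0 : dens set0 = 0.
Proof. by apply: (@addrI _ (dens set0)); rewrite -densU ?setI0 // setU0 addr0. Qed.

Lemma window_avg_shift1 B N :
  window_avg [set j | B (j + 1)] N.+1 - window_avg B N.+1 =
  (\1_B (M N.+1 + N.+1%:Z) - \1_B (M N.+1)) / N.+1%:R.
Proof.
pose g i : RR := \1_B (M N.+1 + i%:Z).
rewrite /window_avg -mulrBl; congr (_ * _).
have -> : \sum_(i < N.+1) (\1_[set j | B (j + 1)] (M N.+1 + (i : nat)%:Z) : RR) =
          \sum_(i < N.+1) g i.+1.
  apply: eq_bigr => i _; rewrite /g !indicE -[(i : nat).+1]addn1 PoszD addrA.
  by congr (_%:R); apply/idP/idP; rewrite !in_setE.
rewrite -sumrB -(big_mkord xpredT (fun i => g i.+1 - g i)) telescope_sumr //.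
by rewrite /g addr0.
Qed.

Lemma dens_shift1 B : dens [set j | B (j + 1)] = dens B.
Proof.
apply: eq_ulim; try exact: window_avg_unit.
rewrite -cvg_shiftS; apply/(@cvgr0Pnorm_le _ RR^o) => eps eps0.
have : \forall N \near \oo, `|harmonic N : RR| <= eps.
  exact: (@cvgr0_norm_le _ RR^o _ _ _ harmonic (@cvg_harmonic RR) _ eps0).
apply: filterS => N; apply: le_trans.
rewrite /= window_avg_shift1 /harmonic /= normrM.
rewrite [X in _ <= X]ger0_norm // [X in _ * X]ger0_norm // ler_piMl // ler_norml.
have /andP[? ?] := indic_unit B (M N.+1 + N.+1%:Z).
by have /andP[? ?] := indic_unit B (M N.+1); apply/andP; split; lra.
Qed.

Lemma dens_shift B (c : int) : dens [set j | B (j + c)] = dens B.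
Proof.
have dens_shiftn n B' : dens [set j | B' (j + n%:Z)] = dens B'.
  elim: n B' => [|n IHn] B'; first by congr dens; apply: funext => j /=; rewrite addr0.
  rewrite -(IHn B') -[RHS]dens_shift1; congr dens; apply: funext => j /=.
  by congr B'; rewrite -addn1 PoszD; ring.
case: c => n; first exact: dens_shiftn.
rewrite NegzE -(dens_shiftn n.+1 [set j | B (j - n.+1%:Z)]).
by congr dens; apply: funext => j /=; rewrite addrK.
Qed.

Lemma le_dens B B' : B `<=` B' -> dens B <= dens B'.
Proof.
by move=> BB'; rewrite -(setDUK BB') densU ?setDIK // lerDl dens_ge0.
Qed.

Lemma densU_le B B' : dens (B `|` B') <= dens B + dens B'.
Proof.
have -> : B `|` B' = B `|` (B' `\` B) by rewrite setUDr setDv setD0.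
rewrite densU ?setDIK //.
by rewrite lerD2l; apply: le_dens => j [].
Qed.

Lemma densDI B U : dens B = dens (B `\` U) + dens (B `&` U).
Proof.
rewrite -{1}(setUIDK B U) densU 1?addrC //.
by apply/seteqP; split => // x [[_ Ux] [_ nUx]].
Qed.

Lemma dens_gt0_nonempty B : 0 < dens B -> B !=set0.
Proof.
apply: contraPP => /set0P/negP/negbNE/eqP ->.
by rewrite dens0 ltxx.
Qed.

Lemma dens_bigU_le (F : nat -> set int) k :
  dens (\big[setU/set0]_(i < k) F i) <= \sum_(i < k) dens (F i).
Proof.
elim: k => [|k IHk]; first by rewrite !big_ord0 dens0.
by rewrite !big_ord_recr /=; apply: le_trans (densU_le _ _) _; rewrite lerD2r.
Qed.

Lemma dens_bigU (F : nat -> set int) k :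
  (forall i j, (j < i)%N -> F i `&` F j = set0) ->
  dens (\big[setU/set0]_(i < k) F i) = \sum_(i < k) dens (F i).
Proof.
move=> Fdisj; elim: k => [|k IHk]; first by rewrite !big_ord0 dens0.
rewrite !big_ord_recr /= densU ?IHk //.
rewrite setIC -bigcup_mkord; apply/seteqP; split => // x [Fkx [i /= ik Fix]].
by have : (F k `&` F i) x by []; rewrite Fdisj.
Qed.

Lemma dens_pack (F : nat -> set int) (a : RR) k :
  (forall i, (i < k)%N -> dens (F i) = a) ->
  (forall i j, (j < i < k)%N -> dens (F i `&` F j) = 0) ->
  k%:R * a <= dens (\big[setU/set0]_(i < k) F i).
Proof.
elim: k => [|k IHk] Fa Fij; first by rewrite mul0r big_ord0 dens0.
rewrite big_ord_recr /=; set U := \big[setU/set0]_(i < k) F i.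
have -> : U `|` F k = U `|` (F k `\` U) by rewrite setUDr setDv setD0.
rewrite densU ?setDIK //.
have FkU0 : dens (F k `&` U) <= 0.
  apply: (@le_trans _ _ (dens (\big[setU/set0]_(j < k) (F k `&` F j)))).
    apply: le_dens => x [Fkx]; rewrite /U -!bigcup_mkord => -[j /= jk Fjx].
    by rewrite -(bigcup_mkord k (fun j => F k `&` F j)); exists j.
  apply: le_trans (dens_bigU_le (fun j => F k `&` F j) k) _.
  by rewrite big1 // => j _; rewrite Fij ?ltnSn ?andbT.
have : k%:R * a <= dens U.
  apply: IHk => [i ik|i j /andP[ji ik]]; first exact: Fa (ltnW ik).
  by apply: Fij; rewrite ji ltnW.
have := densDI (F k) U; rewrite Fa // -natr1 mulrDl mul1r.
by have := dens_ge0 (F k `&` U); lra.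
Qed.

(* Otherwise the translates of A by the multiples of Bd + 1 would pairwise
   overlap in density 0, and more than 1 / dens A of them cannot fit. *)
Lemma exists_far_dens_return (A : set int) (Bd : nat) : 0 < dens A ->
  exists t : int, (Bd < `|t|)%N /\ 0 < dens (A `&` [set j | A (j - t)]).
Proof.
move=> A0; apply: contrapT => /forallNP noreturn.
have zero t : (Bd < `|t|)%N -> dens (A `&` [set j | A (j - t)]) = 0.
  move=> Bdt; apply/eqP; rewrite eq_le dens_ge0 andbT leNgt.
  by apply/negP => At; apply: (noreturn t).
pose m := Num.Def.archi_bound (dens A)^-1.
pose c : int := Bd.+1%:Z.
pose F (i : nat) := [set j | A (j + c * i%:Z)].
have : m%:R * dens A <= dens (\big[setU/set0]_(i < m) F i).
  apply: dens_pack => [i _|i j /andP[ji _]]; first by rewrite dens_shift.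
  have -> : F i `&` F j = [set x | (A `&` [set y | A (y - c * (i%:Z - j%:Z))]) (x + c * i%:Z)].
    apply: funext => x; rewrite /F /=; congr (_ /\ A _); ring.
  rewrite dens_shift zero // abszM absz_nat subzn ?absz_nat; last exact: ltnW.
  by apply: leq_pmulr; rewrite subn_gt0.
have /ltW/(archi_boundP (R := RR)) : 0 < (dens A)^-1 by rewrite invr_gt0.
rewrite -/m -(ltr_pM2r A0) mulVf ?gt_eqF // => mA.
by have := dens_le1 (\big[setU/set0]_(i < m) F i); lra.
Qed.

Lemma exists_residue_dens (X : set int) (q : nat) : (0 < q)%N -> 0 < dens X ->
  exists r : int, 0 < dens (X `&` [set j | (j %% q%:Z)%Z = r]).
Proof.
move=> q0 X0; apply: contrapT => /forallNP zero.
have {}zero (r : nat) : dens (X `&` [set j | (j %% q%:Z)%Z = r%:Z]) <= 0.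
  by rewrite leNgt; apply/negP => Xr; apply: (zero r).
suff : dens X <= 0 by rewrite leNgt X0.
apply: (@le_trans _ _ (dens (\big[setU/set0]_(r < q) (X `&` [set j | (j %% q%:Z)%Z = r%:Z])))).
  apply: le_dens => j Xj.
  rewrite -(bigcup_mkord q (fun r => X `&` [set j | (j %% q%:Z)%Z = r%:Z])).
  have jq0 : (0 <= (j %% q%:Z)%Z) by apply: modz_ge0; rewrite eqz_nat -lt0n.
  exists `|(j %% q%:Z)%Z|%N; last by rewrite /= gez0_abs.
  by rewrite /= -ltz_nat gez0_abs // ltz_pmod // ltz_nat.
apply: le_trans (dens_bigU_le (fun r => X `&` [set j | (j %% q%:Z)%Z = r%:Z]) q) _.
apply: (@le_trans _ _ (\sum_(r < q) (0 : RR))); last by rewrite big1.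
by apply: ler_sum => r _; exact: zero.
Qed.

End WindowDensity.

Definition config := int -> bool.
HB.instance Definition _ := Pointed.on config.

Definition shift (c : int) (x : config) : config := fun i => x (i + c).

Lemma shiftD a b x : shift a (shift b x) = shift (a + b) x.
Proof. by apply: funext => i; rewrite /shift addrA. Qed.

Lemma shift0 x : shift 0 x = x.
Proof. by apply: funext => i; rewrite /shift addr0. Qed.

Definition agree (N : nat) (x x' : config) := forall i : int, (`|i| <= N)%N -> x i = x' i.

Definition cylindrical (B : set config) :=
  exists N : nat, forall x x', agree N x x' -> B x -> B x'.

Lemma agree_sym N x x' : agree N x x' -> agree N x' x.
Proof. by move=> xx' i iN; rewrite xx'. Qed.

Lemma agreeW N N' x x' : (N <= N')%N -> agree N' x x' -> agree N x x'.
Proof. by move=> NN' xx' i iN; apply: xx'; apply: leq_trans iN NN'. Qed.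

Lemma cylindrical0 : cylindrical set0.
Proof. by exists 0%N. Qed.

Lemma cylindricalT : cylindrical setT.
Proof. by exists 0%N. Qed.

Lemma cylindricalU : setU_closed cylindrical.
Proof.
move=> A B [NA hA] [NB hB]; exists (maxn NA NB) => x x' xx' [Ax|Bx].
  by left; apply: (hA x) => //; apply: agreeW xx'; exact: leq_maxl.
by right; apply: (hB x) => //; apply: agreeW xx'; exact: leq_maxr.
Qed.

Lemma cylindricalC : setC_closed cylindrical.
Proof.
move=> A [N hA]; exists N => x x' xx' nAx Ax'; apply: nAx.
by apply: (hA x') => //; exact: agree_sym.
Qed.

Lemma cylindricalI A B : cylindrical A -> cylindrical B -> cylindrical (A `&` B).
Proof.
move=> cA cB; rewrite -[A `&` B]setCK setCI.
by apply/cylindricalC/cylindricalU; exact: cylindricalC.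
Qed.

Lemma cylindrical_shift (c : int) B : cylindrical B -> cylindrical [set x | B (shift c x)].
Proof.
move=> [N hB]; exists (N + `|c|)%N => x x' xx' /=; apply: hB => i iN.
by rewrite /shift xx' //; lia.
Qed.

Lemma agree_succ N x x' :
  agree N x x' -> x N.+1%:Z = x' N.+1%:Z -> x (- N.+1%:Z) = x' (- N.+1%:Z) ->
  agree N.+1 x x'.
Proof.
move=> xx' xx'p xx'n i; rewrite leq_eqVlt ltnS => /orP[|/xx'] //.
case: i => n /eqP /=; first by move=> ->.
by rewrite NegzE => -[->].
Qed.

Definition ulim_config (xs : nat -> config) : config :=
  fun i => `[< Uoo [set n | xs n i] >].

Lemma near_ulim_config (xs : nat -> config) i :
  Uoo [set n | xs n i = ulim_config xs i].
Proof.
rewrite /ulim_config; case: (pselect (Uoo [set n | xs n i])) => xsi.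
  by rewrite asboolT //; apply: filterS xsi.
rewrite asboolF //.
case: (in_ultra_setVsetC [set n | xs n i] Uoo_ultra) => // nxsi.
by apply: filterS nxsi => n /= /negP /negbTE.
Qed.

Lemma near_agree_ulim_config (xs : nat -> config) N :
  Uoo [set n | agree N (xs n) (ulim_config xs)].
Proof.
elim: N => [|N IHN].
  apply: filterS (near_ulim_config xs 0) => n xs0 i.
  by rewrite leqn0 absz_eq0 => /eqP ->.
apply: filterS (filterI (filterI IHN (near_ulim_config xs N.+1%:Z))
  (near_ulim_config xs (- N.+1%:Z))) => n [[]].
exact: agree_succ.
Qed.

(* Compactness of {0,1}^Z: an ultrafilter limit of points of B outside
   ever larger finite unions would lie in B but in no F k. *)
Lemma cylindrical_cover (F : nat -> set config) (B : set config) :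
  cylindrical B -> (forall k, cylindrical (F k)) -> B `<=` \bigcup_k F k ->
  exists n, B `<=` \big[setU/set0]_(k < n) F k.
Proof.
move=> [NB cB] cF BF; apply: contrapT => /forallNP nocover.
have /choice [xs xsP] n : exists x, B x /\ ~ (\big[setU/set0]_(k < n) F k) x.
  by have /nonsubset [x []] := nocover n; exists x.
pose z := ulim_config xs.
have Bz : B z.
  have [n xsn] := filter_ex (near_agree_ulim_config xs NB).
  by apply: (cB (xs n)) => //; case: (xsP n).
have [k _ Fkz] := BF z Bz; have [Nk cFk] := cF k.
have [n [xsn kn]] := filter_ex (filterI (near_agree_ulim_config xs Nk)
  (Uoo_oo (nbhs_infty_gt k))).
case: (xsP n) => _; apply; rewrite -bigcup_mkord; exists (Ordinal kn) => //=.
by apply: (cFk z) => //; exact: agree_sym.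
Qed.

HB.instance Definition _ :=
  @isAlgebraOfSets.Build default_measure_display config cylindrical
    cylindrical0 cylindricalU cylindricalC.

Section OrbitDensity.
Variables (M : nat -> int) (y : config).

Definition orbit_dens (B : set config) : \bar RR := (dens M [set j | B (shift j y)])%:E.

Lemma orbit_dens0 : orbit_dens set0 = 0%E.
Proof. by rewrite /orbit_dens (_ : [set j | _] = set0) ?dens0. Qed.

Lemma orbit_dens_ge0 B : (0 <= orbit_dens B)%E.
Proof. by rewrite lee_fin dens_ge0. Qed.

Lemma orbit_dens_bigU (F : nat -> set config) n : trivIset setT F ->
  orbit_dens (\big[setU/set0]_(k < n) F k) = (\sum_(k < n) orbit_dens (F k))%E.
Proof.
move=> tF; rewrite /orbit_dens sumEFin; congr (_%:E).
rewrite -(@dens_bigU M (fun k => [set j | F k (shift j y)])); last first.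
  move=> i j ji; apply/seteqP; split => // x [Fix Fjx].
  have ij : i = j by apply: tF => //; exists (shift x y).
  by move: ji; rewrite ij ltnn.
congr dens; rewrite -(bigcup_mkord n (fun k => [set j | F k (shift j y)])).
by rewrite -bigcup_mkord; apply/seteqP; split => j [k kn Fkj]; exists k.
Qed.

(* By compactness only finitely many of the disjoint cylinder sets are nonempty. *)
Lemma orbit_dens_sigma_additive : semi_sigma_additive orbit_dens.
Proof.
move=> F cF tF cUF.
have [n0 UFn0] := cylindrical_cover cUF cF (@subset_refl _ _).
have Fn0 k : (n0 <= k)%N -> F k = set0.
  move=> n0k; apply/seteqP; split => // x Fkx.
  have /UFn0 : (\bigcup_k F k) x by exists k.
  rewrite -bigcup_mkord => -[k' /= k'n0 Fk'x].
  have kk' : k = k' by apply: tF => //; exists x.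
  by move: n0k; rewrite kk' leqNgt k'n0.
have UF : \bigcup_k F k = \big[setU/set0]_(k < n0) F k.
  by apply/seteqP; split => // x; rewrite -bigcup_mkord => -[k _ Fkx]; exists k.
apply: cvg_near_cst; exists n0 => // n /= n0n.
rewrite UF orbit_dens_bigU // (big_cat_nat (n := n0)) //= big_mkord.
rewrite [X in (_ + X)%E]big1_seq ?adde0 // => i /andP [_].
by rewrite mem_index_iota => /andP [n0i _]; rewrite Fn0 // orbit_dens0.
Qed.

HB.instance Definition _ :=
  isMeasure.Build _ config RR orbit_dens
    orbit_dens0 orbit_dens_ge0 orbit_dens_sigma_additive.

End OrbitDensity.

Definition Omega := g_sigma_algebraType (cylindrical : set (set config)).

Lemma cylindrical_measurable (B : set config) : cylindrical B -> measurable (B : set Omega).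
Proof. exact: sub_gen_smallest. Qed.

Lemma measurable_shift (c : int) : measurable_fun [set: Omega] (shift c : Omega -> Omega).
Proof.
apply: (measurability (cylindrical : set (set Omega))) => //.
move=> _ [B cB <-]; rewrite setTI; apply: cylindrical_measurable.
exact: cylindrical_shift.
Qed.

Lemma iter_int_shift (k : int) : iter_int (shift 1) (shift (-1)) k = shift k.
Proof.
apply: funext => x; case: k => n /=.
  elim: n => [|n IHn] /=; first by rewrite shift0.
  by rewrite IHn shiftD -addn1 PoszD addrC.
rewrite NegzE; elim: n => [|n IHn] //=.
by rewrite IHn shiftD -[n.+2]addn1 PoszD opprD addrC.
Qed.

Lemma image_shift (k : int) (B : set config) : shift k @` B = [set x | B (shift (- k) x)].
Proof.
apply/seteqP; split => [_ [x Bx <-]|x Bx] /=; first by rewrite shiftD addNr shift0.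
by exists (shift (- k) x) => //; rewrite shiftD addrN shift0.
Qed.

Section ShiftSystem.
Variables (M : nat -> int) (y : config).

Local Notation P := (measure_extension (orbit_dens M y)).

Lemma measure_extension_cylindrical (B : set Omega) : cylindrical B -> P B = orbit_dens M y B.
Proof. by move=> cB; rewrite /measure_extension measurable_mu_extE. Qed.

Lemma measure_extension_setT : P setT = 1%E.
Proof.
rewrite measure_extension_cylindrical /orbit_dens; last exact: cylindricalT.
by have -> : [set j | [set: config] (shift j y)] = setT by []; rewrite densT.
Qed.

HB.instance Definition _ := Measure_isProbability.Build _ _ _ P measure_extension_setT.

(* [P] and its pushforward under the shift (a measure once [mshift1] is in
   context) both extend [orbit_dens], which is shift invariant because [dens] is. *)
Lemma shift_invariant (A : set Omega) : measurable A -> P (shift 1 @^-1` A) = P A.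
Proof.
move=> mA; apply/esym.
have mshift1 := measurable_shift 1.
change (P A = pushforward P (shift 1 : Omega -> Omega) A).
apply: measure_extension_unique mA.
  apply: fin_num_fun_sigma_finite; first by rewrite ltry.
  by move=> B _; rewrite /orbit_dens.
move=> B cB; apply/esym.
transitivity (orbit_dens M y [set x | B (shift 1 x)]).
  exact: measure_extension_cylindrical (cylindrical_shift 1 cB).
rewrite /= /orbit_dens -(dens_shift1 M [set j | B (shift j y)]); congr (dens _ _)%:E.
by apply: funext => j /=; rewrite shiftD addrC.
Qed.

Lemma shift_mps : mps P (shift 1) (shift (-1)).
Proof.
split; [exact: measurable_shift | exact: measurable_shift | | | exact: shift_invariant].
- by move=> x; rewrite shiftD addNr shift0.
- by move=> x; rewrite shiftD addrN shift0.
Qed.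

End ShiftSystem.

Lemma recurrence_dens (R : set int) (M : nat -> int) (D : set int) :
  set_of_recurrence R -> 0 < dens M D -> exists2 k, R k & exists j, D j /\ D (j - k).
Proof.
move=> recR D0.
pose y : config := fun i => `[< D i >].
pose E : set config := [set x | x 0].
have cE : cylindrical E by exists 0%N => x x' xx'; rewrite /E /= xx'.
have cEk k : cylindrical (E `&` [set x | E (shift (- k) x)]).
  by apply: cylindricalI => //; exact: cylindrical_shift.
have E0 : (0 < measure_extension (orbit_dens M y) (E : set Omega))%E.
  rewrite measure_extension_cylindrical //= /orbit_dens lte_fin.
  by apply: lt_le_trans D0 _; apply: le_dens => j Dj; rewrite /E /shift /y /= add0r asboolE.
have [k Rk] := recR _ Omega _ _ _ (shift_mps M y) E (cylindrical_measurable cE) E0.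
rewrite iter_int_shift image_shift => Ek.
have : (0 < measure_extension (orbit_dens M y)
          (E `&` [set x | E (shift (- k) x)] : set Omega))%E by [].
rewrite measure_extension_cylindrical //= /orbit_dens lte_fin.
move=> /dens_gt0_nonempty [j []]; rewrite /E /shift /y /= !add0r !asboolE addrC => Dj Djk.
by exists k => //; exists j.
Qed.

Lemma leq_mod_absz (q : nat) (a b : int) :
  (a %% q%:Z)%Z = (b %% q%:Z)%Z -> a != b -> (q <= `|a - b|)%N.
Proof.
move=> /eqP abq; rewrite -subr_eq0 -absz_gt0 => ab0.
by apply: (dvdn_leq ab0); rewrite -(absz_nat q) -dvdzE -eqz_mod_dvd.
Qed.

Lemma finite_set_absz_bounded (X : set int) :
  finite_set X -> exists Bd : nat, forall s, X s -> (`|s| <= Bd)%N.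
Proof.
move=> /finite_fsetP[Y ->]; exists (\max_(s <- finmap.enum_fset Y) `|s|%N) => s Ys.
exact: (@leq_bigmax_seq _ _ predT (fun s : int => `|s|%N)).
Qed.

Lemma translates_recurrence_far_return (S A : set int) (M : nat -> int) (n : int) (Bd : nat) :
  (forall m, set_of_recurrence (translate S m)) -> 0 < dens M A ->
  exists2 s, (S `&` shifted_diff n A) s & (Bd < `|s|)%N.
Proof.
move=> recS A0.
have [t [Bdt At]] := exists_far_dens_return (Bd + `|n|) A0.
pose q := (Bd + `|n| + `|t|).+1.
have [r Dr] := exists_residue_dens (ltn0Sn (Bd + `|n| + `|t|)) At.
have [k [s Ss sk] [j [[[Aj Ajt] jr] [[_ Ajkt] jkr]]]] := recurrence_dens (recS (- n - t)) Dr.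
exists s.
  by split => //; exists j => //; exists (j - k - t) => //; rewrite -sk; ring.
have [k0|k0] := eqVneq k 0; first by lia.
have qk : (q <= `|k|)%N.
  have := leq_mod_absz (etrans jr (esym jkr)); rewrite opprB addrC subrK; apply.
  by rewrite -subr_eq0 opprB addrC subrK.
by lia.
Qed.

Lemma banach_window_gt (A : set int) (N : nat) (c : RR) : c < banach_window A N ->
  exists M : int, c < (\sum_(i < N) (\1_A (M + (i : nat)%:Z) : RR)) / N%:R.
Proof.
move=> cA.
set E := [set (\sum_(i < N) (\1_A (M + (i : nat)%:Z) : RR)) / N%:R | M in [set: int]].
have supE : has_sup E.
  split; first by exists ((\sum_(i < N) (\1_A (0 + (i : nat)%:Z) : RR)) / N%:R), 0.
  by exists 1 => _ [M _ <-]; case/andP: (window_frac_unit A M N).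
have cA0 : 0 < banach_window A N - c by rewrite subr_gt0.
have [_ [M _ <-] cM] := sup_adherent cA0 supE.
by exists M; move: cM; rewrite /banach_window -/E; lra.
Qed.

(* When the windows do not converge, [lim] returns its default value [0]. *)
Lemma exists_window_dens (A : set int) : 0 < upper_banach_density A ->
  exists M : nat -> int, 0 < dens M A.
Proof.
rewrite /upper_banach_density => A0.
have [[l Al]|nocvg] := pselect (exists l : RR, banach_window A @ \oo --> l); last first.
  move: A0; rewrite /lim /lim_in getPN ?ltxx // => l Al.
  by apply: nocvg; exists l.
rewrite (cvg_lim (@Rhausdorff RR) Al) in A0.
have l2l : l / 2 < l by lra.
have [N0 _ AN0] := cvgr_gt l Al (l / 2) l2l.
have /choice [M MN] N : exists M : int, (N0 <= N)%N ->
    l / 2 < (\sum_(i < N) (\1_A (M + (i : nat)%:Z) : RR)) / N%:R.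
  have [N0N|NN0] := leqP N0 N; last by exists 0 => N0N; lia.
  by have [M AM] := banach_window_gt (AN0 N N0N); exists M.
exists M; apply: (@lt_le_trans _ _ (l / 2)); first lra.
apply: ulim_ge; first exact: window_avg_unit.
by apply: Uoo_oo; exists N0 => // N /= N0N; apply/ltW/MN.
Qed.

Theorem lemma8p2 (S : set int) :
  (forall m : int, set_of_recurrence (translate S m)) ->
  forall (A : set int) (n : int),
    0 < upper_banach_density A ->
    infinite_set (S `&` shifted_diff n A).
Proof.
move=> recS A n /exists_window_dens [M A0] /finite_set_absz_bounded [Bd SABd].
have [s SAs Bds] := translates_recurrence_far_return n Bd recS A0.
by have := SABd s SAs; rewrite leqNgt Bds.
Qed.
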